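(* There is an absolute constant $d$ such that for every finite simple digraph $H$, every positive integer $k$, and every tournament $T$ that does not contain $k$ pairwise arc-disjoint immersion copies of $H$, we have $\mathrm{ctw}(T)\le d\,\|H\|^2k^2$.
   Context: All digraphs are finite and simple; $\|H\|:=|V(H)|+|A(H)|$. A tournament is a simple digraph with exactly one arc between every pair of distinct vertices. An immersion copy of $H$ in $T$ is a subgraph $\widehat H$ of $T$ together with a map sending vertices of $H$ to distinct vertices of $\widehat H$ and arcs $(u,v)$ of $H$ to directed paths from the image of $u$ to the image of $v$, such that every arc of $\widehat H$ lies on exactly one of these paths. For an ordering $\sigma:V(T)\to[|V(T)|]$ (a bijection) and $\alpha\in\{0,\dots,|V(T)|\}$, the $\alpha$-cut is the set of arcs $(u,v)$ with $\sigma(u)>\alpha\ge\sigma(v)$; the width of $\sigma$ is the maximum size of an $\alpha$-cut over all $\alpha$, and the cutwidth $\mathrm{ctw}(T)$ is the minimum width over all orderings. *)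

From mathcomp Require Import all_boot.
Set Implicit Arguments. Unset Strict Implicit. Unset Printing Implicit Defensive.

(* A finite simple digraph on a finite vertex type V is an irreflexive
   relation E : rel V (arc (u,v) iff E u v); no parallel arcs by construction. *)
Definition simple_digraph (V : finType) (E : rel V) : Prop := irreflexive E.

Definition is_tournament (W : finType) (t : rel W) : Prop :=
  irreflexive t /\ forall u v : W, u != v -> (t u v (+) t v u) = true.

Definition arcset (V : finType) (E : rel V) : {set V * V} :=
  [set a : V * V | E a.1 a.2].

Definition dnorm (V : finType) (E : rel V) : nat := #|V| + #|arcset E|.

Definition path_arcs (W : Type) (x : W) (p : seq W) : seq (W * W) :=
  zip (x :: p) p.

Definition dipath (W : finType) (t : rel W) (x y : W) (p : seq W) : Prop :=
  path t x p /\ last x p = y /\ uniq (x :: p).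

Definition imm_arcs (V W : finType) (E : rel V) (phi : V -> W)
    (P : V -> V -> seq W) : seq (W * W) :=
  flatten [seq path_arcs (phi a.1) (P a.1 a.2) | a <- enum (arcset E)].

(* (phi, P) is an immersion copy of H=(V,E) in T=(W,t): phi injective on
   vertices, each arc (u,v) mapped to a directed path from phi u to phi v,
   and every arc of the copy (the union of these paths) lies on exactly one
   of the paths (i.e. the combined arc list is duplicate-free). *)
Definition is_immersion (V W : finType) (E : rel V) (t : rel W)
    (phi : V -> W) (P : V -> V -> seq W) : Prop :=
  injective phi /\
  (forall u v, E u v -> dipath t (phi u) (phi v) (P u v)) /\
  uniq (imm_arcs E phi P).

Definition has_disjoint_immersions (V W : finType) (E : rel V) (t : rel W)
    (k : nat) : Prop :=
  exists (phi : 'I_k -> V -> W) (P : 'I_k -> V -> V -> seq W),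
    (forall i, is_immersion E t (phi i) (P i)) /\
    (forall i j, i != j -> forall e,
        e \in imm_arcs E (phi i) (P i) -> e \notin imm_arcs E (phi j) (P j)).

(* Orderings sigma : V(T) -> [|V(T)|], encoded 0-based: sigma x : 'I_#|W|
   stands for the position (sigma x).+1.  The alpha-cut, alpha in 0..|W|:
   arcs (u,v) with sigma(u) > alpha >= sigma(v) (1-based positions). *)
Definition cut (W : finType) (t : rel W) (sigma : W -> 'I_#|W|) (alpha : nat)
  : nat :=
  #|[set a : W * W | [&& t a.1 a.2, alpha < (sigma a.1).+1
                                   & (sigma a.2).+1 <= alpha]]|.

Definition width (W : finType) (t : rel W) (sigma : W -> 'I_#|W|) : nat :=
  \max_(alpha < #|W|.+1) cut t sigma alpha.

(* Cutwidth: minimum width over all bijective orderings.  The default value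
   #|W| * #|W| bounds every width, so this is the true minimum (orderings
   always exist). *)
Definition ctw (W : finType) (t : rel W) : nat :=
  \big[minn/#|W| * #|W|]_(s : {ffun W -> 'I_#|W|} | injectiveb s) width t s.

(* Order the vertices of T by increasing out-degree and let f(j) count the
   arcs leaving the j vertices of smallest out-degree.  The reverse order has
   width max_j f(j), so ctw T <= f(J) for a maximiser J.  Suppose
   f(J) > 64 (||H|| k)^2.  Map V(H) onto the vertices of ranks J, ...,
   J + |V(H)| - 1 and route the k |A(H)| arcs of k copies of H one after the
   other along shortest paths avoiding the arcs U already used.  The identity
   2 f(j) + j (j - 1) = 2 (sum of the j smallest out-degrees) and the
   maximality of J give 2 f(j) >= 2 f(J) - d (d + 1) for d = |j - J| and pin
   the out-degrees near rank J close to J.  So if y could not reach x, the set R of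
   vertices reachable from y would have size within 3 ||H|| k of J, forcing
   more than |U| arcs to leave R, although all of them lie in U.  A classical
   argument on shortest paths in tournaments keeps the routed paths short,
   hence |U| <= (4 ||H|| k + 4) ||H|| k throughout. *)

From mathcomp Require Import all_boot zify.
Set Implicit Arguments. Unset Strict Implicit. Unset Printing Implicit Defensive.

Lemma count_le_of_tail (T : Type) (P : pred T) m (p : seq T) :
  (forall p1 z p2, p = p1 ++ z :: p2 -> P z -> size p2 < m) -> count P p <= m.
Proof.
elim: p => [|z p IH] //= tail.
have IHp : count P p <= m.
  by apply: IH => p1 y p2 e; apply: (tail (z :: p1)); rewrite e.
case Pz: (P z) => /=; last exact: IHp.
by have := tail [::] z p erefl Pz; have := count_size P p; lia.
Qed.

Lemma flatten_uniq_disjoint (I T : eqType) (F : I -> seq T) (l : seq I) :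
  uniq l -> uniq (flatten (map F l)) ->
  (forall i, i \in l -> uniq (F i)) /\
  (forall i j x, i \in l -> j \in l -> i != j -> x \in F i -> x \notin F j).
Proof.
elim: l => [|i0 l IH] /=; first by split.
case/andP=> i0l ul; rewrite cat_uniq => /and3P[u0 /hasPn disj0 ur].
have [IH1 IH2] := IH ul ur.
have disj x j : j \in l -> x \in F i0 -> x \notin F j.
  move=> jl x0; apply: contraTN x0 => xj; apply: disj0.
  by apply/flatten_mapP; exists j.
split=> [i|i j x]; first by rewrite inE => /predU1P[->|/IH1].
rewrite !inE => /predU1P[->|il] /predU1P[->|jl]; rewrite ?eqxx // => ij.
- exact: disj.
- by move=> xi; apply: contraTN xi => x0; apply: disj.
- exact: IH2.
Qed.

Lemma sumn_map_le (I : eqType) (F : I -> nat) m (l : seq I) :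
  {in l, forall i, F i <= m} -> sumn (map F l) <= m * size l.
Proof.
elim: l => [|i l IH] //= Fl; rewrite mulnS leq_add ?Fl ?mem_head //.
by apply: IH => j jl; apply: Fl; rewrite inE jl orbT.
Qed.

Lemma size_le_count_nor (T : Type) (a b : pred T) (s : seq T) :
  size s <= count [pred z | ~~ a z && ~~ b z] s + count a s + count b s.
Proof.
have := count_predUI a b s; have := count_predC (predU a b) s.
have -> : count (predC (predU a b)) s = count [pred z | ~~ a z && ~~ b z] s.
  by apply: eq_count => z /=; rewrite negb_or.
lia.
Qed.

Lemma bigminn_le (I : eqType) (r : seq I) (P : pred I) (F : I -> nat) d i :
  i \in r -> P i -> \big[minn/d]_(j <- r | P j) F j <= F i.
Proof.
elim: r => // j r IH; rewrite inE big_cons => /predU1P[<- ->|ir Pi]; first exact: geq_minl.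
by case: (P j); [apply: leq_trans (geq_minr _ _) (IH ir Pi) | apply: IH].
Qed.

Lemma card_lt_notin (T : finType) (A : {set T}) x : x \notin A -> #|A| < #|T|.
Proof.
move=> xA; rewrite -cardsT; apply: proper_card; apply/properP.
by split; [apply: subsetT | exists x].
Qed.

Section PathArcs.
Variable T : eqType.
Implicit Types (x z : T) (p : seq T).

Lemma map_snd_path_arcs x p : map snd (path_arcs x p) = p.
Proof. by elim: p x => [|y p IH] x //=; rewrite IH. Qed.

Lemma map_fst_path_arcs x p : map fst (path_arcs x p) = belast x p.
Proof. by elim: p x => [|y p IH] x //=; rewrite IH. Qed.

Lemma size_path_arcs x p : size (path_arcs x p) = size p.
Proof. by rewrite -(size_map snd) map_snd_path_arcs. Qed.

Lemma path_arcs_uniq x p : uniq p -> uniq (path_arcs x p).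
Proof. by move=> up; apply: (@map_uniq _ _ snd); rewrite map_snd_path_arcs. Qed.

Lemma path_arcs_rel (e : rel T) x p :
  path e x p -> {in path_arcs x p, forall a, e a.1 a.2}.
Proof.
elim: p x => [|y p IH] x //= /andP[exy pp] a.
by rewrite inE => /predU1P[->|] //; apply: IH.
Qed.

Lemma count_path_arcs_snd x p z :
  uniq p -> count (fun a => a.2 == z) (path_arcs x p) <= 1.
Proof.
by move=> up; rewrite -(count_map snd (pred1 z)) map_snd_path_arcs count_uniq_mem ?leq_b1.
Qed.

Lemma count_path_arcs_fst x p z :
  uniq (x :: p) -> count (fun a => a.1 == z) (path_arcs x p) <= 1.
Proof.
rewrite -(count_map fst (pred1 z)) map_fst_path_arcs lastI rcons_uniq => /andP[_ ub].
by rewrite count_uniq_mem ?leq_b1.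
Qed.

End PathArcs.

Section ShortestPaths.
Variables (T : finType) (e : rel T).

Definition shortest_path (y x : T) (p : seq T) :=
  [/\ path e y p, last y p = x &
      forall q, path e y q -> last y q = x -> size p <= size q].

Lemma shortest_path_exists y x :
  connect e y x -> exists2 p, shortest_path y x p & uniq (y :: p).
Proof.
move=> /connectP[p0 p0_path p0_last].
pose has_path m := [exists p : m.-tuple T, path e y p && (last y p == x)].
have ex_path : exists m, has_path m.
  by exists (size p0); apply/existsP; exists (in_tuple p0); rewrite p0_path -p0_last eqxx.
case: (ex_minnP ex_path) => m /existsP[p /andP[p_path /eqP p_last]] m_min.
have min_size q : path e y q -> last y q = x -> m <= size q.
  move=> q_path q_last; apply: m_min; apply/existsP.
  by exists (in_tuple q); rewrite q_path q_last eqxx.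
move: p_last; case: (shortenP p_path) => p' p'_path p'_uniq p'_sub p'_last.
exists p' => //; split=> // q q_path q_last.
apply: leq_trans (min_size q q_path q_last).
by rewrite -(size_tuple p); apply: uniq_leq_size => //; case/andP: p'_uniq.
Qed.

Lemma shortest_path_shortcut y x p1 z p2 : shortest_path y x (p1 ++ z :: p2) ->
  (e y z -> p1 = [::]) /\ (e z x -> size p2 <= 1).
Proof.
case; rewrite cat_path last_cat /= => /and3P[p1_path p1_z p2_path] p2_last p_min.
split=> [yz | zx].
  have := p_min (z :: p2); rewrite /= yz p2_path p2_last size_cat /= => /(_ isT erefl).
  by case: p1 {p1_path p1_z p_min} => //= *; lia.
have := p_min (p1 ++ [:: z; x]); rewrite cat_path last_cat /= p1_path p1_z zx.
by rewrite !size_cat /= => /(_ isT erefl); lia.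
Qed.

Lemma shortest_path_count_from y x p : shortest_path y x p -> count (e y) p <= 1.
Proof.
move=> sp; rewrite -count_rev; apply: count_le_of_tail => p1 z p2 pE yz.
move: sp; rewrite -[p]revK pE rev_cat rev_cons -cats1 -catA /= => /shortest_path_shortcut.
by case=> /(_ yz) /(congr1 size); rewrite size_rev => ->.
Qed.

Lemma shortest_path_count_to y x p : shortest_path y x p -> count (e^~ x) p <= 2.
Proof.
move=> sp; apply: count_le_of_tail => p1 z p2 pE zx.
by move: sp; rewrite pE => /shortest_path_shortcut[_ /(_ zx)].
Qed.

Lemma shortest_path_size_le1 y x p : shortest_path y x p -> e y x -> size p <= 1.
Proof. by case=> _ _ p_min yx; apply: (p_min [:: x]); rewrite /= ?yx. Qed.

Lemma shortest_path_size_le2 y z x p :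
  shortest_path y x p -> e y z -> e z x -> size p <= 2.
Proof. by case=> _ _ p_min yz zx; apply: (p_min [:: z; x]); rewrite /= ?yz ?zx. Qed.

End ShortestPaths.

Section Routing.
Variables (W : finType) (t : rel W).
Implicit Types (U : seq (W * W)) (x y : W).

Definition avoid U : rel W := fun a b => t a b && ((a, b) \notin U).
Definition arcs_into U x := count (fun a : W * W => a.2 == x) U.
Definition arcs_from U y := count (fun a : W * W => a.1 == y) U.

Lemma card_arcs_into U x : #|[set z | (z, x) \in U]| <= arcs_into U x.
Proof.
apply: (@leq_trans (size [seq a.1 | a <- U & a.2 == x])); last by rewrite size_map size_filter.
apply: leq_trans (card_size _); apply: subset_leq_card; apply/subsetP => z.
by rewrite inE => zxU; apply/mapP; exists (z, x); rewrite // mem_filter /= eqxx.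
Qed.

Lemma card_arcs_from U y : #|[set z | (y, z) \in U]| <= arcs_from U y.
Proof.
apply: (@leq_trans (size [seq a.2 | a <- U & a.1 == y])); last by rewrite size_map size_filter.
apply: leq_trans (card_size _); apply: subset_leq_card; apply/subsetP => z.
by rewrite inE => yzU; apply/mapP; exists (y, z); rewrite // mem_filter /= eqxx.
Qed.

Section Greedy.
Variables (I : eqType) (src dst : I -> W) (Pr : pred I) (c L : nat).
Hypothesis route_step : forall U i, Pr i -> size U <= L * c ->
  (forall z, arcs_into U z <= c) -> (forall z, arcs_from U z <= c) ->
  exists2 p, dipath (avoid U) (src i) (dst i) p & size p <= L.

(* A path without repeated vertices has at most one arc into and one arc out
   of each vertex, so while fewer than c pairs are routed the used arcs meet
   the bounds demanded by route_step. *)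
Lemma greedy_routing (l : seq I) : uniq l -> all Pr l -> size l <= c ->
  exists Pth : I -> seq W,
   [/\ {in l, forall i, dipath t (src i) (dst i) (Pth i)},
       {in l, forall i, size (Pth i) <= L} &
       uniq (flatten [seq path_arcs (src i) (Pth i) | i <- l])].
Proof.
elim: l => [|i0 l IH] /=; first by exists (fun=> [::]).
case/andP=> i0l ul /andP[Pi0 Pl] sl.
have [Pth [Pth_path Pth_size Pth_uniq]] := IH ul Pl (ltnW sl).
set U := flatten _ in Pth_uniq.
have Pth_uniq_i i : i \in l -> uniq (src i :: Pth i) by case/Pth_path => _ [].
have sizeU : size U <= L * c.
  rewrite size_flatten /shape -map_comp; apply: leq_trans (sumn_map_le _) _.
    by move=> i il /=; rewrite size_path_arcs; apply: Pth_size.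
  by rewrite leq_mul2l ltnW ?orbT.
have intoU z : arcs_into U z <= c.
  rewrite /arcs_into count_flatten -map_comp; apply: leq_trans (sumn_map_le _) _.
    by move=> i /Pth_uniq_i /andP[_ ?] /=; apply: count_path_arcs_snd.
  by rewrite mul1n ltnW.
have fromU z : arcs_from U z <= c.
  rewrite /arcs_from count_flatten -map_comp; apply: leq_trans (sumn_map_le _) _.
    by move=> i /Pth_uniq_i /=; apply: count_path_arcs_fst.
  by rewrite mul1n ltnW.
have [p [p_path [p_last p_uniq]] p_size] := route_step Pi0 sizeU intoU fromU.
have neq_i0 i : i \in l -> (i == i0) = false.
  by move=> il; apply: contraNF i0l => /eqP <-.
exists (fun i => if i == i0 then p else Pth i); split.
- move=> i; rewrite inE => /predU1P[->|il]; last by rewrite neq_i0 //; apply: Pth_path.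
  by rewrite eqxx; split=> //; apply: sub_path p_path => a b /andP[].
- move=> i; rewrite inE => /predU1P[->|il]; last by rewrite neq_i0 //; apply: Pth_size.
  by rewrite eqxx.
- rewrite /= eqxx cat_uniq path_arcs_uniq; last by case/andP: p_uniq.
  have -> : [seq path_arcs (src i) (if i == i0 then p else Pth i) | i <- l] =
            [seq path_arcs (src i) (Pth i) | i <- l].
    by apply/eq_in_map => i il; rewrite neq_i0.
  rewrite -/U Pth_uniq andbT; apply/hasPn => a aU; apply/negP => ap.
  by have /andP[_] := path_arcs_rel p_path ap; rewrite -surjective_pairing aU.
Qed.

End Greedy.

End Routing.

Definition arc_copies (V : finType) (E : rel V) k : seq ('I_k * (V * V)) :=
  [seq (i, a) | i <- enum 'I_k, a <- enum (arcset E)].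

Lemma disjoint_immersions_of_paths (V W : finType) (E : rel V) (t : rel W) k
    (phi : V -> W) (Pth : 'I_k * (V * V) -> seq W) :
  injective phi ->
  {in arc_copies E k, forall a, dipath t (phi a.2.1) (phi a.2.2) (Pth a)} ->
  uniq (flatten [seq path_arcs (phi a.2.1) (Pth a) | a <- arc_copies E k]) ->
  has_disjoint_immersions E t k.
Proof.
move=> phi_inj Pth_path Pth_uniq.
pose arcs i := imm_arcs E phi (fun u v => Pth (i, (u, v))).
have arcsE : flatten [seq path_arcs (phi a.2.1) (Pth a) | a <- arc_copies E k] =
             flatten [seq arcs i | i <- enum 'I_k].
  rewrite /arc_copies; elim: (enum 'I_k) => //= i s IH.
  rewrite map_cat flatten_cat IH /arcs /imm_arcs -map_comp.
  by congr (flatten _ ++ _); apply: eq_map => -[u v].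
rewrite arcsE in Pth_uniq.
have [arcs_uniq arcs_disj] := flatten_uniq_disjoint (enum_uniq _) Pth_uniq.
have copy_in i u v : E u v -> (i, (u, v)) \in arc_copies E k.
  by move=> Euv; apply/allpairsP; exists (i, (u, v)); rewrite !mem_enum !inE.
exists (fun=> phi), (fun i u v => Pth (i, (u, v))); split=> [i | i j ij e].
  split=> //; split=> [u v /(copy_in i)/Pth_path // |].
  by apply: arcs_uniq; rewrite mem_enum.
by apply: arcs_disj; rewrite ?mem_enum.
Qed.

Section Tournament.
Variables (W : finType) (t : rel W).
Hypothesis t_irr : irreflexive t.
Hypothesis t_tot : forall u v : W, u != v -> (t u v (+) t v u) = true.

Local Notation n := #|W|.

Lemma tournament_connex u v : u != v -> t u v || t v u.
Proof. by move=> /t_tot; case: (t u v); case: (t v u). Qed.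

Lemma tournament_xor u v : u != v -> (t u v : nat) + t v u = 1.
Proof. by move=> /t_tot; case: (t u v); case: (t v u). Qed.

Definition outdeg x := #|[set y | t x y]|.

Lemma outdeg_lt x : outdeg x < n.
Proof. by apply: (@card_lt_notin _ _ x); rewrite inE t_irr. Qed.

Lemma outdegE x : outdeg x = \sum_y (t x y : nat).
Proof. by rewrite /outdeg -sum1_card big_mkcond /=; apply: eq_bigr => y _; rewrite inE. Qed.

Definition outflow (Z : {set W}) :=
  #|[set a : W * W | [&& t a.1 a.2, a.1 \in Z & a.2 \notin Z]]|.

Lemma card_set_pairs (P : W -> W -> bool) :
  #|[set a : W * W | P a.1 a.2]| = \sum_a \sum_b (P a b : nat).
Proof.
rewrite -sum1_card big_mkcond /= pair_big /=.
by apply: eq_bigr => -[a b] _; rewrite inE.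
Qed.

Lemma arcs_within (Z : {set W}) :
  2 * (\sum_a \sum_b ([&& t a b, a \in Z & b \in Z] : nat)) = #|Z| * (#|Z| - 1).
Proof.
rewrite mul2n -addnn {2}exchange_big -big_split /=.
rewrite (eq_bigr (fun a => (a \in Z) * (#|Z| - 1))) => [|a _].
  rewrite -big_distrl /=; congr (_ * _); rewrite -sum1_card [RHS]big_mkcond /=.
  by apply: eq_bigr => i _; case: (i \in Z).
rewrite -big_split /=; case aZ: (a \in Z) => /=; last first.
  by rewrite big1 // => b _; rewrite !andbF.
rewrite mul1n (bigD1 a) //= t_irr add0n (cardsD1 a Z) aZ add1n subn1 /= -sum1_card.
rewrite [LHS]big_mkcond [RHS]big_mkcond /=; apply: eq_bigr => b _; rewrite !inE.
have [//|ba] := eqVneq b a; case: (b \in Z); rewrite ?andbT ?andbF //.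
by rewrite tournament_xor // eq_sym.
Qed.

Lemma outflow_handshake (Z : {set W}) :
  2 * outflow Z + #|Z| * (#|Z| - 1) = 2 * \sum_(a in Z) outdeg a.
Proof.
rewrite -arcs_within -mulnDr; congr (2 * _).
rewrite /outflow (card_set_pairs (fun a b => [&& t a b, a \in Z & b \notin Z])).
rewrite -big_split [RHS]big_mkcond /=; apply: eq_bigr => a _.
rewrite -big_split /=; case aZ: (a \in Z) => /=.
  by rewrite outdegE; apply: eq_bigr => b _; case: (t a b); case: (b \in Z).
by rewrite big1 // => b _; rewrite !andbF.
Qed.

Definition deg_key x := outdeg x * n + enum_rank x.
Definition rank x := #|[set y | deg_key y < deg_key x]|.

Lemma deg_key_inj : injective deg_key.
Proof.
move=> x y /(congr1 (modn^~ n)); rewrite /= !modnMDl !modn_small ?ltn_ord //.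
by move/val_inj/enum_rank_inj.
Qed.

Lemma rank_lt x : rank x < n.
Proof. by apply: (@card_lt_notin _ _ x); rewrite inE ltnn. Qed.

Lemma rank_mono x y : deg_key x < deg_key y -> rank x < rank y.
Proof.
move=> xy; apply: proper_card; apply/properP; split; last by exists x; rewrite !inE ?ltnn.
by apply/subsetP => z; rewrite !inE => /ltn_trans; apply.
Qed.

Lemma leq_rank x y : (rank x <= rank y) = (deg_key x <= deg_key y).
Proof.
apply/idP/idP; last first.
  by rewrite leq_eqVlt => /predU1P[/deg_key_inj -> //|/rank_mono/ltnW].
by apply: contraTT; rewrite -!ltnNge => /rank_mono.
Qed.

Lemma rank_inj : injective rank.
Proof. by move=> x y e; apply: deg_key_inj; apply/eqP; rewrite eqn_leq -!leq_rank e leqnn. Qed.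

Lemma outdeg_rank_mono x y : rank x <= rank y -> outdeg x <= outdeg y.
Proof.
rewrite leq_rank /deg_key => xy; have ey : enum_rank y < n := ltn_ord _.
by rewrite leqNgt; apply/negP => yx; nia.
Qed.

Lemma rank_onto j : j < n -> exists x, rank x = j.
Proof.
move=> jn; pose r x := Ordinal (rank_lt x).
have r_inj : injective r by move=> x y /(congr1 val) /rank_inj.
have := @inj_card_onto _ _ r r_inj; rewrite card_ord => /(_ (leqnn _) (Ordinal jn)).
by case/codomP => x /(congr1 val) /= ->; exists x.
Qed.

Definition low j := [set x | rank x < j].
Definition deg_at j := \sum_(x | rank x == j) outdeg x.

Lemma deg_at_rank x : deg_at (rank x) = outdeg x.
Proof. by rewrite /deg_at (big_pred1 x) // => y; apply/eqP/eqP => [/rank_inj|->]. Qed.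

Lemma deg_at_mono i j : i <= j -> j < n -> deg_at i <= deg_at j.
Proof.
move=> ij jn; have [x xi] := rank_onto (leq_ltn_trans ij jn); have [y yj] := rank_onto jn.
by rewrite -xi -yj !deg_at_rank; apply: outdeg_rank_mono; rewrite xi yj.
Qed.

Lemma deg_at_lt j : j < n -> deg_at j < n.
Proof. by move=> jn; have [x <-] := rank_onto jn; rewrite deg_at_rank outdeg_lt. Qed.

Lemma low_rankS x : low (rank x).+1 = x |: low (rank x).
Proof.
apply/setP => y; rewrite !inE ltnS leq_eqVlt; congr (_ || _).
by apply/eqP/eqP => [/rank_inj|->].
Qed.

Lemma low_card_sum j : j <= n ->
  #|low j| = j /\ \sum_(x in low j) outdeg x = \sum_(u < j) deg_at u.
Proof.
elim: j => [_|j IH jn].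
  by rewrite big_ord0 (_ : low 0 = set0) ?cards0 ?big_set0 //; apply/setP => x; rewrite !inE.
have [x xj] := rank_onto jn; have [card_j sum_j] := IH (ltnW jn).
have x_low : x \notin low j by rewrite inE xj ltnn.
rewrite -xj low_rankS cardsU1 big_setU1 /= xj ?x_low // card_j sum_j big_ord_recr /=.
rewrite -xj deg_at_rank; split; [by rewrite add1n | exact: addnC].
Qed.

Lemma card_low j : j <= n -> #|low j| = j.
Proof. by case/low_card_sum. Qed.

Definition low_out j := outflow (low j).

Lemma low_out_handshake j : j <= n ->
  2 * low_out j + j * (j - 1) = 2 * \sum_(u < j) deg_at u.
Proof. by case/low_card_sum => card_j <-; rewrite -{2 3}card_j outflow_handshake. Qed.

Lemma low_out_card : low_out n = 0.
Proof.
apply/eqP; rewrite cards_eq0; apply/eqP/setP => -[a b].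
by rewrite !inE /= !rank_lt andbF.
Qed.

Lemma sum_outdeg_low_min (Z : {set W}) :
  \sum_(x in low #|Z|) outdeg x <= \sum_(x in Z) outdeg x.
Proof.
have := max_card Z; case cardZ: #|Z| => [|j] jn.
  by rewrite (_ : low 0 = set0) ?big_set0 //; apply/setP => x; rewrite !inE.
have [v vj] := rank_onto jn; set B := low j.+1.
have B_le b : b \in B -> outdeg b <= outdeg v.
  by rewrite inE ltnS -vj => /outdeg_rank_mono.
have le_notB a : a \notin B -> outdeg v <= outdeg a.
  by rewrite inE -leqNgt -vj => /ltnW /outdeg_rank_mono.
rewrite (big_setID Z) [X in _ <= X](big_setID B) /= setIC leq_add2l.
apply: (@leq_trans (#|B :\: Z| * outdeg v)).
  by rewrite -sum_nat_const leq_sum // => b /setDP[/B_le].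
have -> : #|B :\: Z| = #|Z :\: B| by rewrite !cardsD [Z :&: B]setIC card_low // cardZ.
by rewrite -sum_nat_const leq_sum // => a /setDP[_ /le_notB].
Qed.

Lemma low_out_min (Z : {set W}) : low_out #|Z| <= outflow Z.
Proof.
have := outflow_handshake (low #|Z|); have := outflow_handshake Z.
have := sum_outdeg_low_min Z; rewrite card_low ?max_card // /low_out; lia.
Qed.

Lemma low_out_shift i q : i + q <= n ->
  2 * low_out (i + q) + 2 * q * i + q * (q - 1) =
  2 * low_out i + 2 * \sum_(u < q) deg_at (i + u).
Proof.
move=> iqn; have := low_out_handshake iqn.
have := low_out_handshake (leq_trans (leq_addr q i) iqn).
have -> : \sum_(u < i + q) deg_at u = \sum_(u < i) deg_at u + \sum_(u < q) deg_at (i + u).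
  by rewrite big_split_ord.
case: q {iqn} => [|q]; case: i => [|i]; rewrite ?big_ord0 ?addn0; nia.
Qed.

Lemma avoid_or_back U z x : z != x -> ~~ avoid t U z x -> t x z || ((z, x) \in U).
Proof.
move=> zx; rewrite /avoid negb_and negbK.
by case/orP: (tournament_connex zx) => [-> /= ->|->]; rewrite ?orbT.
Qed.

Lemma unreachable_small_cut U y x : ~~ connect (avoid t U) y x ->
  exists j, [/\ j <= n, low_out j <= size U, j <= outdeg x + arcs_into U x
              & outdeg y < j + arcs_from U y].
Proof.
move=> yx; set R := [set z | connect (avoid t U) y z].
have yR : y \in R by rewrite inE connect0.
have xR : x \notin R by rewrite inE.
have R_closed a b : a \in R -> avoid t U a b -> b \in R.
  by rewrite !inE => ya ab; apply: connect_trans ya (connect1 ab).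
exists #|R|; split; first exact: max_card.
- apply: leq_trans (low_out_min R) (leq_trans _ (card_size U)).
  apply: subset_leq_card; apply/subsetP => -[a b]; rewrite [_ \in _]inE /= => /and3P[ab aR].
  by apply: contraNT => abU; apply: R_closed aR _; rewrite /avoid ab.
- apply: leq_trans (leq_add (leqnn _) (card_arcs_into U x)).
  apply: leq_trans (leq_card_setU _ _); apply: subset_leq_card; apply/subsetP => z zR.
  have zx : z != x by apply: contraTneq zR => ->.
  by rewrite !inE avoid_or_back //; apply: contraNN xR; apply: R_closed zR.
- have : outdeg y <= #|R :\ y| + arcs_from U y.
    apply: leq_trans (leq_add (leqnn _) (card_arcs_from U y)).
    apply: leq_trans (leq_card_setU _ _); apply: subset_leq_card; apply/subsetP => z.
    rewrite inE => yz; apply/setUP; case yzU: ((y, z) \in U); [by right; rewrite inE | left].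
    rewrite in_setD1; apply/andP; split; first by apply: contraTneq yz => ->; rewrite t_irr.
    by apply: R_closed yR _; rewrite /avoid yz yzU.
  by rewrite (cardsD1 y R) yR; lia.
Qed.

(* Along a shortest path y = v_0, ..., v_d = x avoiding U, only v_1 is an
   out-neighbour of y and only v_(d-1) sends an arc to x.  Hence the
   out-neighbours of y and the v_i other than v_1, v_(d-1), x, at least
   outdeg y - arcs_from U y + d - 3 vertices in all, send no arc to x outside
   U: each is an out-neighbour of x or the tail of an arc of U into x. *)
Lemma short_avoiding_path U y x : connect (avoid t U) y x ->
  exists2 p, dipath (avoid t U) y x p &
    size p <= outdeg x + arcs_into U x + arcs_from U y - outdeg y + 3.
Proof.
set e := avoid t U => /shortest_path_exists[p sp p_uniq].
exists p; first by case: sp => p_path p_last _; do !split.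
case: (leqP (size p) 3) => [short|long]; first by apply: leq_trans short (leq_addl _ _).
have not_yx : ~~ e y x.
  by apply: contraTN long => /(shortest_path_size_le1 sp) ?; lia.
set A := [set z | e y z].
set S := [set z | (z \in y :: p) && [&& ~~ e z x & ~~ e y z]].
have cardS : size p - 2 <= #|S|.
  have -> : #|S| = count [pred z | ~~ e z x && ~~ e y z] (y :: p).
    rewrite -size_filter -(card_uniqP (filter_uniq _ p_uniq)) -cardsE.
    by apply: eq_card => z; rewrite !inE mem_filter andbC.
  have := size_le_count_nor (e^~ x) (e y) (y :: p).
  have := shortest_path_count_to sp; have := shortest_path_count_from sp.
  have not_yy : e y y = false by rewrite /e /avoid t_irr.
  rewrite /= (negbTE not_yx) not_yy; lia.
have AS_into_x : (A :|: S) :\ x \subset [set z | t x z] :|: [set z | (z, x) \in U].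
  apply/subsetP => z; rewrite !inE => /andP[zx zAS]; apply: avoid_or_back zx _.
  case/orP: zAS => [yz|/and3P[//]]; apply: contraTN long => zx'.
  by have := shortest_path_size_le2 sp yz zx'; lia.
have := leq_trans (subset_leq_card AS_into_x) (leq_card_setU _ _).
have: #|A :|: S| <= #|(A :|: S) :\ x| + 1.
  by rewrite (cardsD1 x (A :|: S)) addnC leq_add2l leq_b1.
have: #|A :|: S| = #|A| + #|S|.
  rewrite cardsU; suff -> : A :&: S = set0 by rewrite cards0 subn0.
  by apply/setP => z; rewrite !inE; case: (e y z); rewrite ?andbF.
have : outdeg y <= #|A| + arcs_from U y.
  apply: leq_trans (leq_add (leqnn _) (card_arcs_from U y)).
  apply: leq_trans (leq_card_setU _ _); apply: subset_leq_card; apply/subsetP => z.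
  by rewrite !inE /e /avoid => ->; case: ((y, z) \in U).
have := card_arcs_into U x; rewrite -/(outdeg x); lia.
Qed.

Section Peak.
Variable J : nat.
Hypothesis J_lt : J < n.
Hypothesis J_max : forall j, j <= n -> low_out j <= low_out J.

Lemma deg_at_peak_le : deg_at J <= J.
Proof.
have := low_out_shift (i := J) (q := 1); rewrite addn1 big_ord1 /= addn0 => /(_ J_lt).
by have := J_max J_lt; lia.
Qed.

Lemma peak_le_deg_at : J <= (deg_at J).+1.
Proof.
case: J J_lt J_max => [//|i] i_lt i_max.
have := low_out_shift (i := i) (q := 1); rewrite addn1 big_ord1 /= addn0 => /(_ (ltnW i_lt)).
by have := i_max i (ltnW (ltnW i_lt)); have := deg_at_mono (leqnSn i) i_lt; lia.
Qed.

Lemma low_out_right_of_peak q : J + q <= n ->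
  2 * low_out J <= 2 * low_out (J + q) + q * q.+1.
Proof.
move=> Jqn; have := low_out_shift Jqn; have := peak_le_deg_at.
have : q * deg_at J <= \sum_(u < q) deg_at (J + u).
  rewrite -[q in q * _]card_ord -sum_nat_const leq_sum // => u _.
  by apply: deg_at_mono (leq_addr _ _) (leq_trans _ Jqn); rewrite ltn_add2l.
nia.
Qed.

Lemma low_out_left_of_peak q : q <= J ->
  2 * low_out J <= 2 * low_out (J - q) + q * q.+1.
Proof.
move=> qJ; have Jq : J - q + q = J by rewrite subnK.
have := low_out_shift (i := J - q) (q := q); rewrite Jq => /(_ (ltnW J_lt)).
have : \sum_(u < q) deg_at (J - q + u) <= q * J.
  rewrite -[q in q * _]card_ord -sum_nat_const leq_sum // => u _.
  apply: leq_trans deg_at_peak_le; apply: deg_at_mono J_lt.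
  by rewrite -{2}Jq leq_add2l ltnW.
nia.
Qed.

Lemma low_out_near_peak j : j <= n ->
  2 * low_out J <= 2 * low_out j + (j - J + (J - j)) * (j - J + (J - j)).+1.
Proof.
case: (leqP J j) => [Jj | /ltnW jJ] jn.
  by have := low_out_right_of_peak (q := j - J); rewrite subnKC // => /(_ jn); lia.
by have := low_out_left_of_peak (leq_subr j J); rewrite subKn // => ?; lia.
Qed.

Lemma deg_at_right_of_peak j : J <= j -> j < n -> deg_at j <= j + (j - J).
Proof.
move=> Jj jn; rewrite leqNgt; apply/negP => deg_j.
set u := deg_at j - j.
have ju : j + u = deg_at j by rewrite /u subnKC //; lia.
have jun : j + u <= n by rewrite ju ltnW // deg_at_lt.
have := low_out_shift jun; have := J_max jun.
have : u * deg_at j <= \sum_(v < u) deg_at (j + v).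
  rewrite -[u in u * _]card_ord -sum_nat_const leq_sum // => v _.
  by apply: deg_at_mono (leq_addr _ _) (leq_trans _ jun); rewrite ltn_add2l.
have := low_out_right_of_peak (q := j - J); rewrite subnKC // => /(_ (ltnW jn)).
have : (j - J).+1 * (j - J).+2 <= u * u.+1 by apply: leq_mul; lia.
nia.
Qed.

(* Otherwise the set of vertices reachable from y has a size j within 3 D of
   J, and its at least [low_out j] leaving arcs all lie in U. *)
Lemma peak_connect D U y x : 64 * D ^ 2 < low_out J ->
  size U <= (4 * D + 4) * D -> arcs_into U x <= D -> arcs_from U y <= D ->
  J <= (outdeg y).+1 -> outdeg x <= J + 2 * D -> connect (avoid t U) y x.
Proof.
move=> large sizeU intoU fromU y_deg x_deg; apply/negPn/negP.
case/unreachable_small_cut => j [jn j_out j_into j_from].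
have dist : j - J + (J - j) <= 3 * D by lia.
have := leq_mul dist (dist : _ < (3 * D).+1); have := low_out_near_peak jn.
have : D <= D * D by case: (posnP D) => [-> | /leq_pmulr //].
move: large; rewrite expnS expn1; nia.
Qed.

Lemma peak_room s : s * s.+1 < 2 * low_out J -> J + s <= n.
Proof.
move=> large; rewrite leqNgt; apply/negP => short.
have dist : n - J + (J - n) <= s by lia.
have := leq_mul dist (dist : _ < s.+1); have := low_out_near_peak (leqnn n).
by rewrite low_out_card; lia.
Qed.

Lemma window_embedding (V : finType) : J + #|V| <= n ->
  exists phi : V -> W, [/\ injective phi, forall u, J <= (outdeg (phi u)).+1
                         & forall u, outdeg (phi u) <= J + 2 * #|V|].
Proof.
move=> room; have [w0 _] : exists w : W, true.
  by apply/card_gt0P; apply: leq_ltn_trans J_lt.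
pose phi (u : V) := odflt w0 [pick x | rank x == J + enum_rank u].
have rank_phi u : rank (phi u) = J + enum_rank u.
  have [x rank_x] : exists x, rank x = J + enum_rank u.
    by apply: rank_onto; apply: leq_trans room; rewrite ltn_add2l; apply: ltn_ord.
  by rewrite /phi; case: pickP => [y /eqP //|/(_ x)]; rewrite rank_x eqxx.
have rank_phi_lt (u : V) : J + enum_rank u < n by rewrite -rank_phi rank_lt.
exists phi; split=> [u v /(congr1 rank) | u | u]; rewrite ?rank_phi.
- by move/addnI/val_inj/enum_rank_inj.
- rewrite -deg_at_rank rank_phi; apply: leq_trans peak_le_deg_at _.
  by rewrite ltnS deg_at_mono ?leq_addr.
- rewrite -deg_at_rank rank_phi.
  apply: leq_trans (deg_at_right_of_peak (leq_addr _ _) (rank_phi_lt u)) _.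
  by have : enum_rank u < #|V| := ltn_ord _; lia.
Qed.

Lemma disjoint_immersions_of_peak (V : finType) (E : rel V) k : 0 < k ->
  64 * (dnorm E * k) ^ 2 < low_out J -> has_disjoint_immersions E t k.
Proof.
move=> k_gt0 large; set D := dnorm E * k; set c := size (arc_copies E k).
have card_le : #|V| <= D by rewrite /D /dnorm; nia.
have c_le : c <= D by rewrite /c size_allpairs size_enum_ord -cardE /D /dnorm; nia.
have room : J + #|V| <= n.
  apply: peak_room; apply: leq_ltn_trans (leq_mul card_le (card_le : _ < D.+1)) _.
  by move: large; rewrite expnS expn1; nia.
have [phi [phi_inj phi_lo phi_hi]] := window_embedding room.
have route_step U (a : 'I_k * (V * V)) : a.2 \in arcset E -> size U <= (4 * D + 4) * c ->
    (forall z, arcs_into U z <= c) -> (forall z, arcs_from U z <= c) ->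
    exists2 p, dipath (avoid t U) (phi a.2.1) (phi a.2.2) p & size p <= 4 * D + 4.
  move=> _ sizeU intoU fromU; have := phi_lo a.2.1; have := phi_hi a.2.2.
  have := intoU (phi a.2.2); have := fromU (phi a.2.1).
  have : connect (avoid t U) (phi a.2.1) (phi a.2.2).
    apply: (peak_connect large) (phi_lo _) _.
    - by apply: leq_trans sizeU _; rewrite leq_mul2l c_le orbT.
    - exact: leq_trans (intoU _) c_le.
    - exact: leq_trans (fromU _) c_le.
    - by apply: leq_trans (phi_hi _) _; rewrite leq_add2l leq_mul2l card_le.
  by case/short_avoiding_path => p p_path p_size; exists p => //; lia.
have [||Pth [Pth_path _ Pth_uniq]] :=
  greedy_routing route_step (l := arc_copies E k) _ _ (leqnn _).
- by apply: allpairs_uniq => [||[? ?] [? ?] _ _ [-> ->]]; rewrite ?enum_uniq.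
- by apply/allP => _ /allpairsP[[i a] [_ aE ->]]; rewrite -mem_enum.
exact: disjoint_immersions_of_paths phi_inj Pth_path Pth_uniq.
Qed.

End Peak.

Lemma rev_rank_lt x : n - (rank x).+1 < n.
Proof. by have := rank_lt x; lia. Qed.

(* The vertex of rank r is put at 1-based position n - r, so the alpha-cut
   consists of the arcs leaving the n - alpha vertices of smallest degree. *)
Definition deg_order : {ffun W -> 'I_n} := [ffun x => Ordinal (rev_rank_lt x)].

Lemma deg_order_inj : injectiveb deg_order.
Proof.
apply/injectiveP => x y; rewrite !ffunE => /(congr1 val) /= e; apply: rank_inj.
by move: (rank_lt x) (rank_lt y) e; set m := #|W|; lia.
Qed.

Lemma cut_deg_order a : a <= n -> cut t deg_order a = low_out (n - a).
Proof.
move=> an; apply: eq_card => -[u v]; rewrite !inE /= !ffunE /=.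
have := rank_lt u; have := rank_lt v; set m := #|W| => rank_v rank_u.
have -> : (a < (m - (rank u).+1).+1) = (rank u < m - a) by apply/idP/idP; lia.
by have -> : ((m - (rank v).+1).+1 <= a) = ~~ (rank v < m - a) by apply/idP/idP; lia.
Qed.

Lemma ctw_le_peak J : (forall j, j <= n -> low_out j <= low_out J) -> ctw t <= low_out J.
Proof.
move=> J_max; apply: (@leq_trans (width t deg_order)).
  by apply: bigminn_le; [exact: mem_index_enum | exact: deg_order_inj].
apply/bigmax_leqP => a _; rewrite cut_deg_order ?J_max ?leq_subr //.
by rewrite -ltnS.
Qed.

End Tournament.

Theorem corollary8 :
  exists d : nat,
    forall (V : finType) (E : rel V), simple_digraph E ->
    forall k : nat, 0 < k ->
    forall (W : finType) (t : rel W), is_tournament t ->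
      ~ has_disjoint_immersions E t k ->
      ctw t <= d * (dnorm E) ^ 2 * k ^ 2.
Proof.
exists 64 => V E _ k k_gt0 W t [t_irr t_tot] no_immersions.
case: (@arg_maxnP 'I_#|W|.+1 ord0 xpredT (low_out t) isT) => J _ J_max.
have {}J_max j : j <= #|W| -> low_out t j <= low_out t J.
  by move=> jn; apply: (J_max (Ordinal (jn : j < #|W|.+1))).
apply: leq_trans (ctw_le_peak J_max) _.
rewrite leqNgt; apply/negP => large; apply: no_immersions.
have J_lt : J < #|W|.
  rewrite ltn_neqAle -ltnS ltn_ord andbT; apply: contraTneq large => ->.
  by rewrite low_out_card // -leqNgt.
by apply: (disjoint_immersions_of_peak t_irr t_tot J_lt J_max k_gt0); rewrite expnMn mulnA.
Qed.
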